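(* Let $p,q\ge2$ be coprime, $f=x^p+y^q$, $G=\mathbb{Z}/pq\mathbb{Z}=\langle\Lambda\rangle$ with $\rho(\Lambda)=\mathrm{diag}(e^{2\pi i/p},e^{2\pi i/q})$, $j=\Lambda$, and $\sigma\equiv0$. Then the $\check\varphi$-invariant subspace of $\check{GM_f}$ has dimension $(p-1)(q-1)$ and is spanned by the elements $\check1_{\Lambda^i}$, $i\in\{0,\dots,pq-1\}$, with $i-1\not\equiv0\pmod p$ and $i-1\not\equiv0\pmod q$. For such $i$ write $i\equiv u\pmod p$ with $u\in\{2,\dots,p\}$ and $i\equiv v\pmod q$ with $v\in\{2,\dots,q\}$; then the map $\check1_{\Lambda^i}\mapsto x^{p-u}y^{q-v}$ is a bijection onto the monomial basis $\{x^ay^b:0\le a\le p-2,\ 0\le b\le q-2\}$ of $M_f$, and the dual bi-degree of $\check 1_{\Lambda^i}$ is $(-\deg(x^{p-u}y^{q-v}),\ \deg(x^{p-u}y^{q-v}))$ with $\deg x=\frac1p$, $\deg y=\frac1q$. In particular the invariants of the dual are isomorphic as a bi-graded vector space to the $(a,c)$ realization of $M_f$ (for $(p,q)=(3,4)$ this is $E_6$, for $(3,5)$ it is $E_8$).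
   Context: Standing setup. For quasi-homogeneous $f$ with weights $q_i\in(0,1)$, $d=\sum_i(1-2q_i)$, a finite abelian group $G$ acting diagonally via $\rho$ leaving $f$ invariant, $\rho(g)=\mathrm{diag}(e^{2\pi i\nu_i(g)})$, $\nu_i(g)\in[0,1)$: $\mathrm{Fix}(g)$ is spanned by the coordinates with $\nu_i(g)=0$, $A_g=M_{f|_{\mathrm{Fix}(g)}}$ ($=\mathbb{C}$ if $\mathrm{Fix}(g)=0$) with elements $a1_g$; for $\sigma\in\mathrm{Hom}(G,\mathbb{Z}/2\mathbb{Z})$, $\varphi(h)(a1_g)=(-1)^{\sigma(h)\sigma(g)}\det(\rho(h))^{-1}\det(\rho(h)|_{\mathrm{Fix}(g)})\,a(\rho(h)z)\,1_g$, $\chi(h)=(-1)^{\sigma(h)}\det\rho(h)$. Let $j\in G$ satisfy $\rho(j)=\mathrm{diag}(e^{2\pi iq_i})$. Dual: $\check A_g:=A_{gj^{-1}}$; $a\check1_g$ denotes $a1_{gj^{-1}}$ viewed in $\check A_g$; $\check\varphi(h)(a\check1_g)=\chi(h)\varphi(h)(a1_{gj^{-1}})$ viewed in $\check A_g$. Shifts $s_g=\sum_{i:\nu_i(g)\ne0}(\nu_i(g)-q_i)$, $\bar s_g=\sum_{i:\nu_i(g)\ne0}(1-\nu_i(g)-q_i)$; the dual bi-degree of $a\check1_g$ is $(\deg a+s_{gj^{-1}}-d,\ \deg a+\bar s_{gj^{-1}})$. *)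

(* Coordinates are indexed by 'I_2 (0 = x, 1 = y). *)
From HB Require Import structures.
From mathcomp Require Import all_boot all_order all_algebra all_field.
Unset Printing Implicit Defensive.
Import Order.TTheory GRing.Theory Num.Theory.
Local Open Scope ring_scope.

Section FermatTwo.
Variables p q : nat.

Definition ex (i : 'I_2) : nat := if val i == 0%N then p else q.

Definition wt (i : 'I_2) : rat := ((ex i)%:R)^-1.

Definition dd : rat := \sum_(i < 2) (1 - 2%:R * wt i).

(* e^{2 pi i / n} in algC: n.-root (-1) has argument pi/n *)
Definition zeta (n : nat) : algC := (n.-root (-1)) ^+ 2.

(* group elements: k : nat stands for Lambda^k (only k mod pq matters) *)
Definition rho (k : nat) : 'M[algC]_2 := diag_mx (\row_(i < 2) zeta (ex i) ^+ k).

Definition nu (k : nat) (i : 'I_2) : rat := ((k %% ex i)%:R) / ((ex i)%:R).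

(* coordinate i spans Fix(Lambda^k) iff nu_i = 0 *)
Definition fixedb (k : nat) (i : 'I_2) : bool := nu k i == 0.

Definition sh (k : nat) : rat := \sum_(i < 2 | nu k i != 0) (nu k i - wt i).
Definition shbar (k : nat) : rat := \sum_(i < 2 | nu k i != 0) (1 - nu k i - wt i).

(* A_{Lambda^k} = M_{f|Fix(Lambda^k)}: f|Fix = sum_{i fixed} x_i^{ex i}, whose Milnor
   ring C[x_i : i fixed]/(x_i^{ex i - 1}) has monomial basis prod_i x_i^{a_i} with
   a_i < ex i - 1 for fixed i and a_i = 0 for non-fixed i (so A = C if Fix = 0).
   mon_ok k a b <=> x^a y^b is a basis monomial of A_{Lambda^k}. *)
Definition mon_ok (k : nat) (a b : nat) : bool :=
  (if fixedb k 0 then (a < (p.-1))%N else a == 0%N) &&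
  (if fixedb k 1 then (b < (q.-1))%N else b == 0%N).

Definition gjinv (k : nat) : nat := ((k + p * q).-1 %% (p * q))%N.

(* index of basis of the dual: (g, (a, b)) stands for x^a y^b \check 1_g,
   an element of \check A_g = A_{g j^{-1}} *)
Definition dual_idx := {t : 'I_(p * q) * ('I_p * 'I_q) |
  mon_ok (gjinv t.1) t.2.1 t.2.2}.
HB.instance Definition _ := Finite.on dual_idx.

Definition DualSp := {ffun dual_idx -> algC^o}.

Definition dsector (t : dual_idx) : nat := val (val t).1.
Definition da (t : dual_idx) : nat := val (val t).2.1.
Definition db (t : dual_idx) : nat := val (val t).2.2.

Definition bvec (t : dual_idx) : DualSp := [ffun s => ((s == t)%:R : algC)].

(* the action: h = Lambda^m, sigma : G -> Z/2 given as a bool-valued function *)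
Definition detFix (m k : nat) : algC := \prod_(i < 2 | fixedb k i) rho m i i.

(* a(rho(h) z) for the monomial a = x^a y^b, as a multiple of x^a y^b *)
Definition monact (m a b : nat) : algC := (rho m 0 0) ^+ a * (rho m 1 1) ^+ b.

Definition phi_coef (sigma : 'I_(p * q) -> bool) (h : 'I_(p * q)) (k : 'I_(p * q)) (a b : nat)
  : algC :=
  (-1) ^+ (sigma h && sigma k) * (\det (rho h))^-1 * detFix h k * monact h a b.

Definition chi (sigma : 'I_(p * q) -> bool) (h : 'I_(p * q)) : algC :=
  (-1) ^+ sigma h * \det (rho h).

Lemma gjinv_lt (k : nat) : (0 < p * q)%N -> (gjinv k < p * q)%N.
Proof. by move=> H; rewrite /gjinv ltn_mod. Qed.

(* g j^{-1} as a group element of 'I_(p*q) (for p*q > 0; junk otherwise) *)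
Definition gjinvG (k : 'I_(p * q)) : 'I_(p * q).
Proof.
  case: (ltnP 0 (p * q)) => H.
  - exact: (Ordinal (gjinv_lt k H)).
  - exact: k.
Defined.

(* \check phi(h)(a \check 1_g) = chi(h) phi(h)(a 1_{g j^{-1}}) *)
Definition phicheck_fun (sigma : 'I_(p * q) -> bool) (h : 'I_(p * q)) (v : DualSp)
  : DualSp :=
  [ffun t => chi sigma h * phi_coef sigma h (gjinvG (val t).1) (da t) (db t) * v t].

Definition phicheck (sigma : 'I_(p * q) -> bool) (h : 'I_(p * q)) : 'End(DualSp) :=
  linfun (phicheck_fun sigma h).

Definition InvSp (sigma : 'I_(p * q) -> bool) : {vspace DualSp} :=
  (\bigcap_(h : 'I_(p * q)) lker (phicheck sigma h - \1)%VF)%VS.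

Definition mdeg (a b : nat) : rat := a%:R * wt 0 + b%:R * wt 1.
Definition dual_bideg (t : dual_idx) : rat * rat :=
  (mdeg (da t) (db t) + sh (gjinv (dsector t)) - dd,
   mdeg (da t) (db t) + shbar (gjinv (dsector t))).

Definition good (i : nat) : bool :=
  ~~ (p%:Z %| i%:Z - 1)%Z && ~~ (q%:Z %| i%:Z - 1)%Z.

(* u in {2,...,p} (resp. v in {2,...,q}) with i = u mod p (resp. i = v mod q),
   for good i *)
Definition uu (i : nat) : nat := ((i + p - 2) %% p + 2)%N.
Definition vv (i : nat) : nat := ((i + q - 2) %% q + 2)%N.

Definition one_good (t : dual_idx) : bool :=
  [&& good (dsector t), da t == 0%N & db t == 0%N].

End FermatTwo.

From HB Require Import structures.
From mathcomp Require Import all_boot all_order all_algebra all_field.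
From mathcomp Require Import ring lra zify.
Import Order.TTheory GRing.Theory Num.Theory.
Local Open Scope ring_scope.

(** For [sigma = 0] every [\check\varphi(Lambda^h)] is diagonal in the basis
    [x^a y^b \check 1_g], with eigenvalue [zeta_p^(h (a + [p | k])) zeta_q^(h (b + [q | k]))]
    where [Lambda^k = g j^-1]. As [zeta_p] and [zeta_q] are primitive roots of unity of
    coprime orders, a basis vector is invariant iff [p | a + [p | k]] and [q | b + [q | k]],
    and the bounds on the basis monomials of [A_(g j^-1)] turn this into [a = b = 0] with
    neither [p] nor [q] dividing [k]. Since [k = i - 1] for [g = Lambda^i], the invariants
    are spanned by the [\check 1_(Lambda^i)] with [p] and [q] not dividing [i - 1]; the
    Chinese remainder theorem counts them and matches them with the monomials
    [x^(p-u) y^(q-v)], and the bi-degree comes from [nu(Lambda^(i-1)) = ((u-1)/p, (v-1)/q)].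

    That [zeta n = (n.-root (-1))^2] is a primitive [n]-th root of unity needs an extremal
    argument: among the roots of [-1] in a coset of the powers of [zeta n], the one of
    largest real part is [n.-root (-1)] or its conjugate. *)

Lemma normC1_Re_Im (z : algC) : `|z| = 1 -> 'Re z ^+ 2 + 'Im z ^+ 2 = 1.
Proof. by move=> z1; rewrite -normC2_Re_Im z1 expr1n. Qed.

Lemma norm_expr_eq1 (z : algC) n : (0 < n)%N -> `|z ^+ n| = 1 -> `|z| = 1.
Proof. by move=> n_gt0 zn1; apply/eqP; rewrite -(pexpr_eq1 n_gt0) // -normrX zn1. Qed.

Lemma norm1_Re_ge1 (z : algC) : `|z| = 1 -> 1 <= 'Re z -> z = 1.
Proof.
move=> z1 Rez; have Re_z : 'Re z == `|z| by rewrite z1 eq_le Rez -z1 (leif_Re_Creal z).1.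
by move: Re_z; rewrite (leif_Re_Creal z).2 => /ger0_norm <-.
Qed.

(* [(x, y)] and [(x0, y0)] lie on the unit circle with [y0 > 0]: if rotating [(x, y)]
   either way by twice the angle of [(x0, y0)] does not increase [x], and [x <= x0],
   then [x = x0]. *)
Lemma circle_rotation_max (R : realFieldType) (x y x0 y0 : R) :
  x0 ^+ 2 + y0 ^+ 2 = 1 -> x ^+ 2 + y ^+ 2 = 1 -> 0 < y0 ->
  x * (x0 ^+ 2 - y0 ^+ 2) - y * (2 * x0 * y0) <= x ->
  x * (x0 ^+ 2 - y0 ^+ 2) + y * (2 * x0 * y0) <= x -> x <= x0 -> x = x0.
Proof.
move=> circ0 circ y0_gt0.
have -> : x * (x0 ^+ 2 - y0 ^+ 2) = x - 2 * (x * y0 * y0).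
  by rewrite (_ : x0 ^+ 2 = 1 - y0 ^+ 2); [ring | lra].
have -> : y * (2 * x0 * y0) = 2 * (x0 * y * y0) by ring.
move=> le1 le2 le_x_x0.
have x_ge0 : 0 <= x.
  have : 0 <= x * y0 * y0 by lra.
  by rewrite -mulrA pmulr_lge0 // mulr_gt0.
have x0y_le : x0 * y <= x * y0 by rewrite -(ler_pM2r y0_gt0); lra.
have Nx0y_le : - (x0 * y) <= x * y0 by rewrite -(ler_pM2r y0_gt0); lra.
have : x0 ^+ 2 * y ^+ 2 <= x ^+ 2 * y0 ^+ 2 by nra.
nra.
Qed.

Section RootOfMinusOne.
Variable n : nat.
Hypothesis n_gt1 : (1 < n)%N.
Let n_gt0 : (0 < n)%N := ltnW n_gt1.
Local Notation w := (n.-root (-1 : algC)).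

Lemma rootCN1K : w ^+ n = -1. Proof. exact: rootCK. Qed.

Lemma norm_rootCN1 : `|w| = 1.
Proof. by apply: (norm_expr_eq1 _ _ n_gt0); rewrite rootCN1K normrN1. Qed.

Lemma Re_le_rootCN1 y : y ^+ n = -1 -> 'Re y <= 'Re w.
Proof.
move=> yn; have [Im_ge0|Im_lt0] := real_ge0P (Creal_Im y).
  exact: rootC_Re_max.
rewrite -Re_conj; apply: rootC_Re_max => //.
  by rewrite -rmorphXn yn rmorphN1.
by rewrite Im_conj oppr_ge0 ltW.
Qed.

Lemma Im_rootCN1_gt0 : 0 < 'Im w.
Proof.
rewrite lt_def Im_rootC_ge0 // andbT; apply/eqP => Im0.
have w_real : w = 'Re w by rewrite {1}[w]Crect Im0 mulr0 addr0.
have /eqP : 'Re w ^+ 2 = 1.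
  by have := normC1_Re_Im _ norm_rootCN1; rewrite Im0 expr0n addr0.
rewrite sqrf_eq1 => /pred2P[] Re_w.
  have /eqP := rootCN1K; rewrite w_real Re_w expr1n -subr_eq0 opprK.
  by rewrite (pnatr_eq0 _ 2).
(* A real [w] would be [-1]; then the root [- eps] of [-1] has real part [<= -1], forcing
   the primitive root [eps] to be [1]. *)
have [eps prim_eps] := C_prim_root_exists n_gt0.
have eps_norm : `|eps| = 1.
  by apply: (norm_expr_eq1 _ _ n_gt0); rewrite (prim_expr_order prim_eps) normr1.
have : 'Re (- eps) <= -1.
  rewrite -Re_w; apply: Re_le_rootCN1.
  have wN1 : w = -1 by rewrite w_real Re_w.
  by rewrite exprNn (prim_expr_order prim_eps) mulr1 -{1}wN1 rootCN1K.
rewrite raddfN lerN2 => /(norm1_Re_ge1 _ eps_norm)-eps1.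
have : (n %| 1)%N by rewrite (prim_order_dvd prim_eps) eps1 expr1n.
by rewrite dvdn1 => /eqP n1; move: n_gt1; rewrite n1.
Qed.

Lemma rootCN1_Re_locmax t : t ^+ n = -1 ->
  'Re (t * zeta n) <= 'Re t -> 'Re (t * (zeta n)^*) <= 'Re t -> t = w \/ t = w^*.
Proof.
move=> tn le_Re_tu le_Re_tu'.
pose re z : algR := in_algR (Creal_Re z); pose im z : algR := in_algR (Creal_Im z).
have circle z : `|z| = 1 -> re z ^+ 2 + im z ^+ 2 = 1.
  by move=> z1; apply: val_inj => /=; rewrite -!expr2 normC1_Re_Im.
have t1 : `|t| = 1 by apply: (norm_expr_eq1 _ _ n_gt0); rewrite tn normrN1.
have Re_zeta : 'Re (zeta n) = 'Re w * 'Re w - 'Im w * 'Im w by rewrite /zeta expr2 ReM.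
have Im_zeta : 'Im (zeta n) = 2 * 'Re w * 'Im w by rewrite /zeta expr2 ImM; ring.
have Re_tw : re t = re w.
  apply: (@circle_rotation_max _ _ _ _ _ (circle _ norm_rootCN1) (circle _ t1)).
  - exact: Im_rootCN1_gt0.
  - by move: le_Re_tu; rewrite ReM Re_zeta Im_zeta.
  - by move: le_Re_tu'; rewrite ReM Re_conj Im_conj Re_zeta Im_zeta mulrN opprK.
  - exact: Re_le_rootCN1.
have {Re_tw} Re_tw : 'Re t = 'Re w by move: Re_tw => /(congr1 algRval).
have /eqP : 'Im t ^+ 2 = 'Im w ^+ 2.
  apply: (@addrI _ ('Re w ^+ 2)).
  by rewrite (normC1_Re_Im _ norm_rootCN1) -Re_tw (normC1_Re_Im _ t1).
rewrite eqf_sqr => /pred2P[] Im_tw; [left | right].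
  by rewrite [t]Crect [w]Crect Re_tw Im_tw.
by rewrite [t]Crect [w^*]Crect Re_conj Im_conj Re_tw Im_tw.
Qed.

Lemma zeta_expr_order : zeta n ^+ n = 1.
Proof. by rewrite /zeta -exprM mulnC exprM rootCN1K sqrrN expr1n. Qed.

Lemma conj_zeta : (zeta n)^* = zeta n ^+ n.-1.
Proof.
have zeta_conjK : (zeta n)^* * zeta n = 1.
  by rewrite -normCKC normrX norm_rootCN1 !expr1n.
have zetaS : zeta n ^+ n = zeta n * zeta n ^+ n.-1 by rewrite -exprS prednK.
by rewrite -[LHS]mulr1 -zeta_expr_order zetaS mulrA zeta_conjK mul1r.
Qed.

(* Maximise the real part over the [n] roots [w z zeta^k] of [-1]: the maximum is a local
   one, hence [w] or its conjugate. *)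
Lemma zeta_mul_expr_eq1 z : z ^+ n = 1 -> exists m, z * zeta n ^+ m = 1.
Proof.
move=> zn; pose re (x : algC) : algR := in_algR (Creal_Re x).
have [k _ k_max] := @arg_maxP _ _ _ (Ordinal n_gt0) predT
  (fun k : 'I_n => re (w * z * zeta n ^+ k)) isT.
have Re_max m : 'Re (w * z * zeta n ^+ m) <= 'Re (w * z * zeta n ^+ k).
  rewrite -(expr_mod m zeta_expr_order); exact: (k_max (Ordinal (ltn_pmod m n_gt0))).
set t := w * z * zeta n ^+ k in Re_max.
have tn : t ^+ n = -1.
  by rewrite /t 2!exprMn rootCN1K zn exprAC zeta_expr_order expr1n !mulr1.
have Re_tu : 'Re (t * zeta n) <= 'Re t by have := Re_max k.+1; rewrite exprSr mulrA.
have Re_tu' : 'Re (t * (zeta n)^*) <= 'Re t.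
  by have := Re_max (k + n.-1)%N; rewrite conj_zeta exprD mulrA.
have w_neq0 : w != 0 by rewrite -normr_eq0 norm_rootCN1 oner_eq0.
have [tw|tw'] := rootCN1_Re_locmax _ tn Re_tu Re_tu'.
  by exists k; apply: (mulfI w_neq0); rewrite mulr1 mulrA -/t tw.
have wt1 : w * t = 1 by rewrite tw' -normCK norm_rootCN1 expr1n.
by exists k.+1; rewrite -wt1 /t exprS mulrCA !mulrA.
Qed.

Lemma prim_root_zeta : n.-primitive_root (zeta n).
Proof.
have [eps prim_eps] := C_prim_root_exists n_gt0.
have [m eps_m] := zeta_mul_expr_eq1 _ (prim_expr_order prim_eps).
have [d prim_d d_n] := prim_order_exists n_gt0 zeta_expr_order.
suff n_d : (n %| d)%N.
  have /eqP dn : d == n by rewrite eqn_dvd d_n n_d.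
  by rewrite -[X in X.-primitive_root _]dn.
rewrite (prim_order_dvd prim_eps); apply/eqP.
have := congr1 (fun x => x ^+ d) eps_m.
by rewrite /= exprMn -exprM mulnC exprM (prim_expr_order prim_d) !expr1n mulr1.
Qed.
End RootOfMinusOne.

Lemma zeta_coprime_expr_eq1 p q a b : (1 < p)%N -> (1 < q)%N -> coprime p q ->
  (zeta p ^+ a * zeta q ^+ b == 1) = (p %| a)%N && (q %| b)%N.
Proof.
have dvd_left r s c e : (1 < r)%N -> (1 < s)%N -> coprime r s ->
    zeta r ^+ c * zeta s ^+ e = 1 -> (r %| c)%N.
  move=> r_gt1 s_gt1 co_rs ce1; have := congr1 (fun x => x ^+ s) ce1.
  rewrite -(Gauss_dvdl _ co_rs) (prim_order_dvd (prim_root_zeta _ r_gt1)).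
  rewrite /= exprMn expr1n -(exprM (zeta r)) -(exprM (zeta s)) [(e * s)%N]mulnC.
  rewrite (exprM (zeta s) s) (prim_expr_order (prim_root_zeta _ s_gt1)).
  by rewrite expr1n mulr1 => ->.
move=> p_gt1 q_gt1 co_pq; apply/eqP/andP => [ab1 | [p_a q_b]].
  split; first exact: dvd_left ab1.
  by apply: (dvd_left _ p b a) => //; rewrite 1?coprime_sym // mulrC.
move: p_a q_b; rewrite (prim_order_dvd (prim_root_zeta _ p_gt1)).
by rewrite (prim_order_dvd (prim_root_zeta _ q_gt1)) => /eqP-> /eqP->; rewrite mulr1.
Qed.

Lemma zeta_neq0 n : (1 < n)%N -> zeta n != 0.
Proof.
move=> n_gt1; apply/eqP => zeta0; have := prim_expr_order (prim_root_zeta _ n_gt1).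
by rewrite zeta0 expr0n gtn_eqF ?(ltnW n_gt1) // => /eqP; rewrite eq_sym oner_eq0.
Qed.

Section DiagonalOperators.
Variables (K : fieldType) (I : finType).
Local Notation V := {ffun I -> K^o}.

Definition delta_ffun (t : I) : V := [ffun s => (s == t)%:R].

Lemma delta_ffunE t s : delta_ffun t s = (s == t)%:R.
Proof. exact: ffunE. Qed.

Lemma scale_ffunE a (v : V) t : (a *: v) t = a * v t.
Proof. exact: ffunE. Qed.

Definition diag_ffun (d : I -> K) (v : V) : V := [ffun t => d t * v t].

Lemma diag_ffunE d v t : diag_ffun d v t = d t * v t.
Proof. exact: ffunE. Qed.

Lemma diag_ffun_is_linear d : linear (diag_ffun d).
Proof. by move=> a u v; apply/ffunP => t; rewrite !ffunE mulrDr mulrCA. Qed.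

Lemma delta_notin_span (s : seq I) t :
  t \notin s -> delta_ffun t \notin <<[seq delta_ffun u | u <- s]>>%VS.
Proof.
move=> t_s; apply/negP => /(coord_span (X := in_tuple _)) /(congr1 (fun v : V => v t)).
rewrite /= delta_ffunE eqxx sum_ffunE big1 => [/eqP|i _]; first by rewrite oner_eq0.
have i_s : (i < size s)%N by rewrite -(size_map delta_ffun).
rewrite scale_ffunE /= (nth_map t) // delta_ffunE eq_sym.
by rewrite (negPf (memPn t_s _ (mem_nth _ i_s))) mulr0.
Qed.

Lemma free_delta_ffun (s : seq I) : uniq s -> free [seq delta_ffun t | t <- s].
Proof.
elim: s => [|t s IHs] /=; first by rewrite nil_free.
by case/andP=> t_s /IHs free_s; rewrite free_cons free_s delta_notin_span.
Qed.

Lemma dim_span_delta_ffun (A : {pred I}) :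
  \dim <<[seq delta_ffun t | t <- enum A]>> = #|A|.
Proof. by rewrite (eqP (free_delta_ffun _ (enum_uniq A))) size_map cardE. Qed.

Lemma ffun_delta_sum (A : {pred I}) (v : V) :
  (forall t, t \notin A -> v t = 0) -> v = \sum_(t in A) v t *: delta_ffun t.
Proof.
move=> supp_v; apply/ffunP => s; rewrite sum_ffunE.
under eq_bigr do rewrite scale_ffunE delta_ffunE.
have [sA|sNA] := boolP (s \in A).
  rewrite (bigD1 s) //= eqxx mulr1 big1 ?addr0 // => t /andP[_ ts].
  by rewrite eq_sym (negPf ts) mulr0.
rewrite supp_v // big1 // => t tA.
by rewrite (_ : (s == t) = false) ?mulr0 //; apply: contraNF sNA => /eqP->.
Qed.

End DiagonalOperators.

Arguments delta_ffun {K I}.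
Arguments diag_ffun {K I}.

HB.instance Definition _ (K : fieldType) (I : finType) (d : I -> K) :=
  GRing.isLinear.Build K {ffun I -> K^o}
  {ffun I -> K^o} _ (diag_ffun d) (@diag_ffun_is_linear K I d).

Section DiagonalFixedSpace.
Variables (K : fieldType) (I H : finType) (c : H -> I -> K).
Local Notation V := {ffun I -> K^o}.

Definition diag_fixed_space : {vspace V} :=
  (\bigcap_h lker (linfun (diag_ffun (c h)) - \1)%VF)%VS.

Definition fixed_coord : {pred I} := [pred t | [forall h, c h t == 1]].

Lemma diag_fixedP h (v : V) :
  reflect (forall t, c h t * v t = v t) (v \in lker (linfun (diag_ffun (c h)) - \1)%VF).
Proof.
rewrite memv_ker add_lfunE opp_lfunE id_lfunE lfunE subr_eq0.
apply: (iffP eqP) => [/ffunP fix_v t | fix_v].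
  by rewrite -[in RHS]fix_v diag_ffunE.
by apply/ffunP => t; rewrite diag_ffunE.
Qed.

Lemma mem_diag_fixed_space (v : V) :
  (v \in diag_fixed_space) = [forall t, (t \notin fixed_coord) ==> (v t == 0)].
Proof.
rewrite memvE; apply/subv_bigcapP/forallP => [fix_v t | supp_v h _]; rewrite -?memvE.
  apply/implyP => /forallPn[h c_ht]; have /diag_fixedP/(_ t) := fix_v h isT.
  move=> fix_t; apply: contraNT c_ht => vt_neq0.
  by apply/eqP; apply: (@mulIf K (v t)); rewrite ?mul1r.
apply/diag_fixedP => t; have [/forallP/(_ h)/eqP-> | t_nfix] := boolP (t \in fixed_coord).
  exact: mul1r.
by move/implyP: (supp_v t) => /(_ t_nfix)/eqP->; rewrite mulr0.
Qed.

Lemma diag_fixed_spaceE :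
  diag_fixed_space = <<[seq delta_ffun t | t <- enum fixed_coord]>>%VS.
Proof.
apply/eqP; rewrite eqEsubv; apply/andP; split.
  apply/subvP => v; rewrite mem_diag_fixed_space => /forallP supp_v.
  rewrite (@ffun_delta_sum _ _ fixed_coord v) => [|t t_nfix]; last first.
    by apply/eqP; move/implyP: (supp_v t); apply.
  apply: memv_suml => t t_fix; apply/memvZ/memv_span.
  by apply: map_f; rewrite mem_enum.
apply/span_subvP => x /mapP[t]; rewrite mem_enum => t_fix ->.
rewrite mem_diag_fixed_space; apply/forallP => s; apply/implyP => s_nfix.
by rewrite delta_ffunE (_ : (s == t) = false) //; apply: contraNF s_nfix => /eqP->.
Qed.

End DiagonalFixedSpace.

Arguments diag_fixed_space {K I H}.
Arguments fixed_coord {K I H}.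

Section UpperResidue.
Local Open Scope nat_scope.
Variable n : nat.
Hypothesis n_gt1 : 1 < n.

Lemma uu_mod i : uu n i = i %[mod n].
Proof. by rewrite /uu modnDml subnK ?modnDr //; lia. Qed.

Lemma uu_bounds i : 2 <= uu n i <= n.+1.
Proof. by rewrite /uu; have := ltn_pmod (i + n - 2) (ltnW n_gt1); lia. Qed.

Lemma modn_neq1 x : 2 <= x <= n -> x %% n != 1.
Proof.
case/andP=> x_ge2; rewrite leq_eqVlt => /predU1P[->|x_lt_n]; first by rewrite modnn.
by rewrite modn_small //; lia.
Qed.

Lemma leq_uu i : (uu n i <= n) = (i %% n != 1).
Proof.
rewrite -uu_mod; have /andP[u_ge2 u_le] := uu_bounds i; set u := uu n i in u_ge2 u_le *.
have [u_le_n | u_gt_n] := leqP u n; first by rewrite modn_neq1 ?u_ge2.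
have -> : u = 1 + n by lia.
by rewrite modnDr modn_small.
Qed.

Lemma uu_mod_eq i x : 2 <= x <= n -> i = x %[mod n] -> uu n i = x.
Proof.
move=> /andP[x_ge2 x_le_n] i_x.
have u_le_n : uu n i <= n by rewrite leq_uu i_x modn_neq1 ?x_ge2.
have /andP[u_ge2 _] := uu_bounds i.
have : (uu n i).-1 = x.-1 %[mod n].
  by apply/eqP; rewrite -(eqn_modDr 1) !addn1 !prednK ?uu_mod ?i_x //; lia.
by rewrite !modn_small; lia.
Qed.
End UpperResidue.

Lemma good_modn p q i : (1 < p)%N -> (1 < q)%N ->
  good p q i = (i %% p != 1)%N && (i %% q != 1)%N.
Proof.
move=> p_gt1 q_gt1; rewrite /good -!eqz_mod_dvd !modz_nat !eqz_nat.
by rewrite !(modn_small (_ : 1 < _)%N).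
Qed.

Lemma dvdn_small d m : (m < d)%N -> (d %| m)%N = (m == 0)%N.
Proof. by move=> lt_m_d; rewrite /dvdn modn_small. Qed.

Section FermatTwo.
Variables p q : nat.
Hypotheses (p_gt1 : (1 < p)%N) (q_gt1 : (1 < q)%N) (co_pq : coprime p q).
Let p_gt0 : (0 < p)%N := ltnW p_gt1.
Let q_gt0 : (0 < q)%N := ltnW q_gt1.
Let pq_gt0 : (0 < p * q)%N. Proof. by rewrite muln_gt0 p_gt0. Qed.
Let p_dvd_pq : (p %| p * q)%N := dvdn_mulr q (dvdnn p).
Let q_dvd_pq : (q %| p * q)%N := dvdn_mull p (dvdnn q).

Lemma gjinv_modn d k : (d %| p * q)%N -> (gjinv p q k).+1 = k %[mod d].
Proof.
move=> d_pq; rewrite /gjinv -addn1 -modnDml (modn_dvdm _ d_pq) modnDml addn1.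
by rewrite prednK ?addn_gt0 ?pq_gt0 ?orbT // -modnDmr (eqP d_pq) addn0.
Qed.

Lemma dvdn_gjinv d k : (1 < d)%N -> (d %| p * q)%N ->
  (d %| gjinv p q k)%N = (k %% d == 1)%N.
Proof.
move=> d_gt1 d_pq; rewrite -(gjinv_modn _ _ d_pq) /dvdn -addn1.
by rewrite -{2}(modn_small d_gt1) -{2}[1%N]add0n eqn_modDr mod0n.
Qed.

Lemma gjinv_modn_uu d k : (1 < d)%N -> (d %| p * q)%N -> (k %% d != 1)%N ->
  (gjinv p q k %% d = (uu d k).-1)%N.
Proof.
move=> d_gt1 d_pq kd.
have r_gt0 : (0 < gjinv p q k %% d)%N.
  by rewrite lt0n -/(dvdn _ _) dvdn_gjinv.
rewrite (@uu_mod_eq _ d_gt1 _ (gjinv p q k %% d).+1) //.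
  by rewrite ltnS r_gt0 ltn_pmod // ltnW.
by rewrite -addn1 modnDml addn1 gjinv_modn.
Qed.

Lemma fixedbE k i : fixedb p q k i = (ex p q i %| k)%N.
Proof.
rewrite /fixedb /nu mulf_eq0 invr_eq0 !pnatr_eq0 /ex.
by case: ifP => _; rewrite ?(gtn_eqF p_gt0) ?(gtn_eqF q_gt0) orbF.
Qed.

Lemma rhoE m i : rho p q m i i = zeta (ex p q i) ^+ m.
Proof. by rewrite mxE eqxx mulr1n mxE. Qed.

Lemma det_rho_neq0 m : \det (rho p q m) != 0.
Proof.
rewrite det_diag; apply/prodf_neq0 => i _; rewrite mxE expf_neq0 //.
by apply: zeta_neq0; rewrite /ex; case: ifP.
Qed.

Definition dual_sector (t : dual_idx p q) : nat := gjinv p q (dsector p q t).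

Definition dual_coef (h : 'I_(p * q)) (t : dual_idx p q) : algC :=
  let sigma := fun _ => false in
  chi p q sigma h * phi_coef p q sigma h (gjinvG p q (val t).1) (da p q t) (db p q t).

Lemma dual_coefE h t : dual_coef h t =
  zeta p ^+ (h * ((p %| dual_sector t) + da p q t)) *
  zeta q ^+ (h * ((q %| dual_sector t) + db p q t)).
Proof.
have sec : val (gjinvG p q (val t).1) = dual_sector t.
  by rewrite /gjinvG; case: ltnP => // pq_le0; move: pq_gt0; rewrite ltnNge pq_le0.
rewrite /dual_coef /chi /phi_coef /= !expr0 !mul1r -!mulrA mulVKf ?det_rho_neq0 //.
rewrite /detFix big_mkcond !big_ord_recl big_ord0 /= mulr1 !fixedbE sec /monact !rhoE /ex /=.
rewrite !mulnDr !exprD !exprM.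
by case: (p %| _)%N; case: (q %| _)%N; rewrite ?expr1 ?expr0 /=; ring.
Qed.

Lemma mon_ok_dual t :
  ((p %| dual_sector t) + da p q t < p)%N && ((q %| dual_sector t) + db p q t < q)%N.
Proof.
have /andP[a_ok b_ok] := valP t; rewrite !fixedbE in a_ok b_ok.
by apply/andP; split; [move: a_ok | move: b_ok]; rewrite /ex /da /db /=;
  case: (_ %| _)%N => /=; lia.
Qed.

Lemma good_dual_sector t :
  good p q (dsector p q t) = ~~ (p %| dual_sector t)%N && ~~ (q %| dual_sector t)%N.
Proof. by rewrite good_modn // !dvdn_gjinv. Qed.

Lemma fixed_coord_dual : fixed_coord dual_coef =i [pred t | one_good p q t].
Proof.
move=> t; rewrite !inE /one_good good_dual_sector.
apply/forallP/idP => [fix_t | /and3P[/andP[/negPf-p_k /negPf-q_k] /eqP-a0 /eqP-b0] h].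
  have pq_gt1 : (1 < p * q)%N by rewrite -[1%N]muln1 ltn_mul.
  have := fix_t (Ordinal pq_gt1); rewrite dual_coefE !mul1n zeta_coprime_expr_eq1 //.
  have /andP[lt_p lt_q] := mon_ok_dual t.
  rewrite (dvdn_small _ _ lt_p) (dvdn_small _ _ lt_q) !addn_eq0 !eqb0.
  by case/andP=> /andP[-> ->] /andP[-> ->].
by rewrite dual_coefE p_k q_k a0 b0 !muln0 !expr0 mulr1.
Qed.

Lemma good_uu_vv i : good p q i ->
  [/\ (2 <= uu p i <= p)%N, uu p i = i %[mod p],
      (2 <= vv q i <= q)%N & vv q i = i %[mod q]].
Proof.
rewrite good_modn // -(leq_uu _ p_gt1) -(leq_uu _ q_gt1) => /andP[u_le v_le].
have /andP[u_ge2 _] := uu_bounds _ p_gt1 i; have /andP[v_ge2 _] := uu_bounds _ q_gt1 i.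
by rewrite u_ge2 u_le v_ge2 v_le !uu_mod.
Qed.

Lemma good_mon_ok i : good p q i -> mon_ok p q 0 (p - uu p i) (q - vv q i).
Proof.
case/good_uu_vv=> /andP[u_ge2 _] _ /andP[v_ge2 _] _.
by rewrite /mon_ok !fixedbE !dvdn0; apply/andP; split; lia.
Qed.

Definition crt_split (i : 'I_(p * q)) : 'I_p * 'I_q :=
  (Ordinal (ltn_pmod i p_gt0), Ordinal (ltn_pmod i q_gt0)).

Lemma crt_split_inj : injective crt_split.
Proof.
move=> i j /(congr1 (fun x : 'I_p * 'I_q => (val x.1, val x.2))) [ij_p ij_q].
apply/ord_inj/eqP; rewrite -(modn_small (ltn_ord i)) -(modn_small (ltn_ord j)).
by rewrite chinese_remainder // ij_p ij_q !eqxx.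
Qed.

Lemma crt_split_bij : bijective crt_split.
Proof. by apply: (inj_card_bij crt_split_inj); rewrite card_prod !card_ord. Qed.

Lemma card_good : #|[set i : 'I_(p * q) | good p q i]| = ((p - 1) * (q - 1))%N.
Proof.
have -> : [set i : 'I_(p * q) | good p q i] =
    crt_split @^-1: setX [set~ Ordinal p_gt1] [set~ Ordinal q_gt1].
  by apply/setP => i; rewrite !inE good_modn // -!(inj_eq val_inj).
rewrite on_card_preimset; last exact/onW_bij/crt_split_bij.
by rewrite cardsX !cardsC1 !card_ord !subn1.
Qed.

Lemma good_mon_inj : {in [pred i : 'I_(p * q) | good p q i] &,
  injective (fun i : 'I_(p * q) => (p - uu p i, q - vv q i)%N)}.
Proof.
move=> i j /good_uu_vv[/andP[_ ui_le] ui_mod /andP[_ vi_le] vi_mod].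
move=> /good_uu_vv[/andP[_ uj_le] uj_mod /andP[_ vj_le] vj_mod] [uij vij].
apply: crt_split_inj; congr pair; apply: val_inj => /=.
  by rewrite -ui_mod -uj_mod -(subKn ui_le) uij subKn.
by rewrite -vi_mod -vj_mod -(subKn vi_le) vij subKn.
Qed.

Lemma good_mon_onto a b : mon_ok p q 0 a b ->
  exists2 i : 'I_(p * q), good p q i & (p - uu p i, q - vv q i)%N = (a, b).
Proof.
rewrite /mon_ok !fixedbE !dvdn0 /= => /andP[a_lt b_lt].
have /andP[pa_ge2 pa_le] : (2 <= p - a <= p)%N by lia.
have /andP[qb_ge2 qb_le] : (2 <= q - b <= q)%N by lia.
have [a_le b_le] : (a <= p)%N /\ (b <= q)%N by lia.
have [crt_inv _ crt_invK] := crt_split_bij.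
set x := (Ordinal (ltn_pmod (p - a) p_gt0), Ordinal (ltn_pmod (q - b) q_gt0)).
have /(congr1 (fun y : 'I_p * 'I_q => (val y.1, val y.2))) [i_p i_q] := crt_invK x.
have ui : uu p (crt_inv x) = (p - a)%N by apply: uu_mod_eq; rewrite ?pa_ge2.
have vi : vv q (crt_inv x) = (q - b)%N by apply: uu_mod_eq; rewrite ?qb_ge2.
exists (crt_inv x); last by rewrite ui vi !subKn.
by rewrite good_modn // -(leq_uu _ p_gt1) -(leq_uu _ q_gt1) ui [uu q _]vi pa_le qb_le.
Qed.

Lemma mon_ok0 k : mon_ok p q k 0 0.
Proof. by rewrite /mon_ok !ltn_predRL p_gt1 q_gt1 !if_same. Qed.

Definition check_one (i : 'I_(p * q)) : dual_idx p q :=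
  exist _ (i, (Ordinal p_gt0, Ordinal q_gt0)) (mon_ok0 (gjinv p q i)).

Lemma check_one_inj : injective check_one.
Proof. by move=> i j /(congr1 (fun t : dual_idx p q => (val t).1)). Qed.

Lemma one_good_imset :
  [pred t | one_good p q t] =i check_one @: [set i : 'I_(p * q) | good p q i].
Proof.
move=> t; rewrite !inE; apply/idP/imsetP => [|[i]]; last first.
  by rewrite inE => good_i ->; rewrite /one_good /= good_i.
case/and3P=> good_t a0 b0; exists (val t).1; first by rewrite inE.
apply: val_inj; move: a0 b0; rewrite /da /db /=.
case: (val t) => i [a b] /= /eqP-a0 /eqP-b0.
by congr (_, (_, _)); apply: val_inj.
Qed.

Lemma card_one_good :
  #|[pred t : dual_idx p q | one_good p q t]| = ((p - 1) * (q - 1))%N.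
Proof. by rewrite (eq_card one_good_imset) (card_imset _ check_one_inj) card_good. Qed.

Lemma one_good_bideg t : one_good p q t ->
  let m := mdeg p q (p - uu p (dsector p q t)) (q - vv q (dsector p q t)) in
  dual_bideg p q t = (- m, m).
Proof.
case/and3P => good_g /eqP-a0 /eqP-b0; set g := dsector p q t in good_g *.
have := good_g; rewrite good_modn // => /andP[g_p g_q].
have [/andP[u_ge2 u_le] _ /andP[v_ge2 v_le] _] := good_uu_vv _ good_g.
have k_p := gjinv_modn_uu p g p_gt1 p_dvd_pq g_p.
have k_q : (gjinv p q g %% q)%N = (vv q g).-1 :=
  gjinv_modn_uu q g q_gt1 q_dvd_pq g_q.
have nu_p : (uu p g).-1%:R / p%:R != 0 :> rat.
  by rewrite mulf_neq0 ?invr_eq0 ?pnatr_eq0 -?lt0n // -ltnS prednK // ltnW.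
have nu_q : (vv q g).-1%:R / q%:R != 0 :> rat.
  by rewrite mulf_neq0 ?invr_eq0 ?pnatr_eq0 -?lt0n // -ltnS prednK // ltnW.
rewrite /dual_bideg a0 b0 -/g /sh /shbar /dd /mdeg /nu /wt /ex.
rewrite !big_mkcond !big_ord_recl !big_ord0 /= big_mkcond !big_ord_recl big_ord0 /=.
rewrite k_p k_q nu_p nu_q -!subn1 !natrB ?(ltnW u_ge2) ?(ltnW v_ge2) //.
have [p_neq0 q_neq0] : p%:R != 0 :> rat /\ q%:R != 0 :> rat by rewrite !pnatr_eq0 -!lt0n.
by congr (_, _); field; rewrite p_neq0 q_neq0.
Qed.
End FermatTwo.

Theorem mainTheorem11 (p q : nat) :
  (2 <= p)%N -> (2 <= q)%N -> coprime p q ->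
  let sigma := fun _ : 'I_(p * q) => false in
  [/\ \dim (InvSp p q sigma) = ((p - 1) * (q - 1))%N &
      InvSp p q sigma =
        <<[seq bvec p q t | t <- enum [pred t : dual_idx p q | one_good p q t]]>>%VS] /\
  [/\ (forall i : 'I_(p * q), good p q i ->
         [/\ (2 <= uu p i <= p)%N, uu p i = i %[mod p],
             (2 <= vv q i <= q)%N & vv q i = i %[mod q]]),
      (forall i : 'I_(p * q), good p q i -> mon_ok p q 0 (p - uu p i) (q - vv q i)),
      {in [pred i : 'I_(p * q) | good p q i] &,
         injective (fun i : 'I_(p * q) => (p - uu p i, q - vv q i)%N)},
      (forall a b : nat, mon_ok p q 0 a b ->
         exists2 i : 'I_(p * q), good p q i & (p - uu p i, q - vv q i)%N = (a, b)) &
      (forall t : dual_idx p q, one_good p q t ->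
         dual_bideg p q t =
           (- mdeg p q (p - uu p (dsector p q t)) (q - vv q (dsector p q t)),
              mdeg p q (p - uu p (dsector p q t)) (q - vv q (dsector p q t))))].
Proof.
move=> p_gt1 q_gt1 co_pq sigma.
have InvE : InvSp p q sigma = diag_fixed_space (dual_coef p q) by [].
have fixE := fixed_coord_dual _ _ p_gt1 q_gt1 co_pq.
split; first split.
- by rewrite InvE diag_fixed_spaceE dim_span_delta_ffun (eq_card fixE) card_one_good.
- by rewrite InvE diag_fixed_spaceE (eq_enum fixE).
split.
- exact: good_uu_vv.
- exact: good_mon_ok.
- exact: good_mon_inj.
- exact: good_mon_onto.
- exact: one_good_bideg.
Qed.
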